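(* Let $T$ be a complete discrete valuation ring with fraction field $K$ and uniformizer $t$. Let $\widehat R_0 \supset T$ be a complete discrete valuation ring with uniformizer $t$ and fraction field $F_0$, with absolute value $|t^n u| = \alpha^{-n}$ ($\alpha>1$ fixed, $u \in \widehat R_0^\times$). Let $F_1, F_2 \subset F_0$ be subfields containing $T$ and let $V \subset F_1 \cap \widehat R_0$, $W \subset F_2 \cap \widehat R_0$ be $t$-adically complete $T$-submodules with $V + W = \widehat R_0$, $V \cap t\widehat R_0 = tV$ and $W \cap t\widehat R_0 = tW$. Let $n$ be a positive integer, let $\Omega \subset F_0^n \times F_0^n$ be an open neighborhood of $(0,0)$ and let $f: \Omega \to F_0^n$ be an analytic map such that (i) $f(0,0)=0$ and (ii) $f(x,0) = f(0,x) = x$ for all $x$ in an open neighborhood of $0$. Then there is a real number $\epsilon>0$ such that for every $a \in F_0^n$ with $|a| \le \epsilon$ there exist $v \in V^n$ and $w \in W^n$ with $(v,w) \in \Omega$ and $f(v,w) = a$.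
   Context: $t$-adically complete means $V \to \varprojlim_m V/t^{m+1}V$ is an isomorphism. On $F_0^n$ one uses the max norm. *)

From HB Require Import structures.
From mathcomp Require Import all_boot all_order all_algebra.
From mathcomp Require Import reals.
Set Implicit Arguments. Unset Strict Implicit. Unset Printing Implicit Defensive.
Import Order.TTheory GRing.Theory Num.Theory.
Local Open Scope ring_scope.

Section Defs.
Variables (R : realType) (F0 : fieldType).

Definition is_subring (S : F0 -> Prop) : Prop :=
  [/\ S 0, S 1, (forall x y, S x -> S y -> S (x - y))
    & (forall x y, S x -> S y -> S (x * y))].

Definition is_subfield (S : F0 -> Prop) : Prop :=
  is_subring S /\ (forall x, S x -> x != 0 -> S x^-1).

Definition unit_of (S : F0 -> Prop) (u : F0) : Prop :=
  [/\ S u, u != 0 & S u^-1].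

Definition is_fraction_field_of (S : F0 -> Prop) : Prop :=
  forall x : F0, exists a b, [/\ S a, S b, b != 0 & x = a / b].

Definition is_DVR_unif (S : F0 -> Prop) (t : F0) : Prop :=
  [/\ is_subring S, S t, t != 0, ~ S t^-1
    & forall x, S x -> x != 0 -> exists (k : nat) u, unit_of S u /\ x = t ^+ k * u].

Definition is_submodule (T M : F0 -> Prop) : Prop :=
  [/\ M 0, (forall x y, M x -> M y -> M (x + y))
    & (forall a x, T a -> M x -> M (a * x))].

Definition in_tpow (t : F0) (m : nat) (M : F0 -> Prop) (x : F0) : Prop :=
  exists y, M y /\ x = t ^+ m * y.

(* t-adic completeness: the canonical map M -> lim_m M / t^(m+1) M is an
   isomorphism.  Unfolded: injectivity (kernel = intersection of the t^(m+1) M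
   is zero) and surjectivity (every compatible system of residues, given by
   representatives x_m with x_(m+1) - x_m in t^(m+1) M, comes from some x). *)
Definition tadic_complete (t : F0) (M : F0 -> Prop) : Prop :=
  (forall x, M x -> (forall m, in_tpow t m.+1 M x) -> x = 0) /\
  (forall xs : nat -> F0, (forall m, M (xs m)) ->
     (forall m, in_tpow t m.+1 M (xs m.+1 - xs m)) ->
     exists x, M x /\ forall m, in_tpow t m.+1 M (x - xs m)).

Variable abs : F0 -> R.

Definition vnorm (m : nat) (x : 'I_m -> F0) : R :=
  \big[Num.max/0]_(i < m) abs (x i).

Definition vsub (m : nat) (x y : 'I_m -> F0) : 'I_m -> F0 := fun i => x i - y i.

Definition vzero (m : nat) : 'I_m -> F0 := fun _ => 0.

Definition open_set (m : nat) (D : ('I_m -> F0) -> Prop) : Prop :=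
  forall p, D p -> exists r : R, 0 < r /\ forall q, vnorm (vsub q p) < r -> D q.

Definition ps_partial (m : nat) (c : ('I_m -> nat) -> F0) (x : 'I_m -> F0)
  (N : nat) : F0 :=
  \sum_(k : {ffun 'I_m -> 'I_N.+1} | (\sum_(i < m) (k i : nat) <= N)%N)
     c (fun i => (k i : nat)) * \prod_(i < m) x i ^+ k i.

Definition analytic_on (m : nat) (D : ('I_m -> F0) -> Prop)
  (g : ('I_m -> F0) -> F0) : Prop :=
  forall p, D p -> exists (r : R) (c : ('I_m -> nat) -> F0),
    [/\ 0 < r,
        (forall q, vnorm (vsub q p) < r -> D q),
        (forall eps : R, 0 < eps -> exists N : nat, forall k : 'I_m -> nat,
            (N <= \sum_(i < m) k i)%N -> abs (c k) * r ^+ (\sum_(i < m) k i) < eps)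
      & (forall q, vnorm (vsub q p) < r ->
           forall eps : R, 0 < eps -> exists N : nat, forall M : nat, (N <= M)%N ->
             abs (ps_partial c (vsub q p) M - g q) < eps)].

(* identification F0^n x F0^n = F0^(n+n) (max norm on the product) *)
Definition lpart (n : nat) (z : 'I_(n + n) -> F0) : 'I_n -> F0 :=
  fun i => z (lshift n i).
Definition rpart (n : nat) (z : 'I_(n + n) -> F0) : 'I_n -> F0 :=
  fun i => z (rshift n i).

Definition open_pairs (n : nat) (Om : ('I_n -> F0) -> ('I_n -> F0) -> Prop) : Prop :=
  open_set (fun z : 'I_(n + n) -> F0 => Om (lpart z) (rpart z)).

Definition analytic_pairs (n : nat) (Om : ('I_n -> F0) -> ('I_n -> F0) -> Prop)
  (f : ('I_n -> F0) -> ('I_n -> F0) -> ('I_n -> F0)) : Prop :=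
  forall i : 'I_n, analytic_on (fun z : 'I_(n + n) -> F0 => Om (lpart z) (rpart z))
                               (fun z => f (lpart z) (rpart z) i).

End Defs.

Arguments vzero {F0} m.

(* Write [f x y = x + y + g x y].  Because [f x 0 = x] and [f 0 y = y], only mixed monomials
   (in both [x] and [y], hence of total degree >= 2) survive in [g]; with the ultrametric
   inequality this makes [g] contracting near 0: if [x = x'] and [y = y'] modulo [t^m], all of
   them in [t^N R0], then [g x y = g x' y'] modulo [t^(m+1)], the value group being discrete.
   Given [a] in [t^N R0], solve [f v w = a] by a Newton-type iteration: if [a - f x y = t^k b],
   split [b = p + q] with [p] in [V] and [q] in [W] and replace [(x, y)] by
   [(x + t^k p, y + t^k q)]; the new residual is a difference of values of [g], so it lies in
   [t^(k+1) R0].  The corrections converge since [V] and [W] are complete, and the limit is a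
   solution since [R0] is separated. *)
From HB Require Import structures.
From mathcomp Require Import all_boot all_order all_algebra.
From mathcomp Require Import reals ring lra zify.
From Stdlib Require Import FunctionalExtensionality IndefiniteDescription Classical.
Import Order.TTheory GRing.Theory Num.Theory.
Local Open Scope ring_scope.
Set Implicit Arguments. Unset Strict Implicit. Unset Printing Implicit Defensive.

Section Submodules.
Variables (F0 : fieldType) (S M : F0 -> Prop) (t : F0).
Hypotheses (hS : is_subring S) (hM : is_submodule S M).

Lemma subring_exprn x k : S x -> S (x ^+ k).
Proof.
have [_ S1 _ SM] := hS => Sx.
by elim: k => [|k IH]; rewrite ?expr0 // exprS; apply: SM.
Qed.

Lemma subringN x : S x -> S (- x).
Proof. by have [S0 _ SB _] := hS => Sx; rewrite -sub0r; apply: SB. Qed.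

Lemma subring_submodule : is_submodule S S.
Proof.
have [S0 _ SB SM] := hS; split=> // x y Sx Sy.
by rewrite -[y]opprK; apply: SB => //; apply: subringN.
Qed.

Lemma unit_ofM u v : unit_of S u -> unit_of S v -> unit_of S (u * v).
Proof.
have [_ _ _ SM] := hS => -[Su u0 Su'] [Sv v0 Sv'].
by split; rewrite ?mulf_neq0 ?invfM //; apply: SM.
Qed.

Lemma submoduleN x : M x -> M (- x).
Proof.
have [_ S1 _ _] := hS; have [_ _ MZ] := hM => Mx.
by rewrite -mulN1r; apply: MZ => //; apply: subringN.
Qed.

Lemma in_tpowD m x y : in_tpow t m M x -> in_tpow t m M y -> in_tpow t m M (x + y).
Proof.
have [_ MD _] := hM => -[x' [Mx' ->]] [y' [My' ->]].
by exists (x' + y'); rewrite mulrDr; split => //; apply: MD.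
Qed.

Lemma in_tpowN m x : in_tpow t m M x -> in_tpow t m M (- x).
Proof. by case=> x' [Mx' ->]; exists (- x'); rewrite mulrN; split => //; apply: submoduleN. Qed.

Lemma in_tpowB m x y : in_tpow t m M x -> in_tpow t m M y -> in_tpow t m M (x - y).
Proof. by move=> Mx /in_tpowN; apply: in_tpowD. Qed.

Lemma in_tpow_le k l x : S t -> (l <= k)%N -> in_tpow t k M x -> in_tpow t l M x.
Proof.
have [_ _ MZ] := hM => St lk [y [My ->]].
exists (t ^+ (k - l) * y); split; first by apply: MZ => //; apply: subring_exprn.
by rewrite mulrA -exprD subnKC.
Qed.

Lemma in_tpow_mem m x : S t -> in_tpow t m M x -> M x.
Proof.
have [_ _ MZ] := hM => St [y [My ->]].
by apply: MZ => //; apply: subring_exprn.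
Qed.

End Submodules.

Lemma in_tpow_sub (F0 : fieldType) (t : F0) (M M' : F0 -> Prop) m x :
  (forall y, M y -> M' y) -> in_tpow t m M x -> in_tpow t m M' x.
Proof. by move=> MM' [y [My ->]]; exists y; split => //; apply: MM'. Qed.

Definition vin_tpow (F0 : fieldType) (t : F0) (m : nat) (M : F0 -> Prop) n
    (x : 'I_n -> F0) :=
  forall i, in_tpow t m M (x i).

Definition perturbation_contracts (F0 : fieldType) (t : F0) (N : nat) (P : F0 -> Prop) n
    (f : ('I_n -> F0) -> ('I_n -> F0) -> 'I_n -> F0) :=
  forall m x y x' y', vin_tpow t N P x -> vin_tpow t N P y ->
    vin_tpow t N P x' -> vin_tpow t N P y' ->
    vin_tpow t m P (vsub x x') -> vin_tpow t m P (vsub y y') ->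
    forall i, in_tpow t m.+1 P (f x y i - x i - y i - (f x' y' i - x' i - y' i)).

Lemma tadic_vlimit (F0 : fieldType) (T M : F0 -> Prop) (t : F0) n N (xs : nat -> 'I_n -> F0) :
  is_subring T -> T t -> is_submodule T M -> tadic_complete t M -> (0 < N)%N ->
  (forall j i, M (xs j i)) -> (forall j, vin_tpow t (N + j) M (vsub (xs j.+1) (xs j))) ->
  exists x, (forall i, M (x i)) /\ forall m, vin_tpow t m.+1 M (vsub x (xs m)).
Proof.
move=> hT Tt hM [_ M_lim] N0 Mxs dxs.
suff /functional_choice [x hx] : forall i, exists x, M x /\ forall m, in_tpow t m.+1 M (x - xs m i).
  by exists x; split => [i|m i]; [case: (hx i) | exact: (hx i).2].
move=> i; apply: M_lim => // m; apply: (in_tpow_le hT hM Tt _ (dxs m i)).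
by rewrite addnC -addn1 leq_add2l.
Qed.

Lemma exists_invexpr_lt (R : archiFieldType) (a rho : R) :
  1 < a -> 0 < rho -> exists N : nat, (0 < N)%N /\ a ^- N < rho.
Proof.
move=> a1 rho0.
have bernoulli (N : nat) : N%:R * (a - 1) <= a ^+ N.
  elim: N => [|N IH]; first by rewrite mul0r expr0.
  have aN1 : 1 <= a ^+ N by rewrite exprn_ege1 // ltW.
  rewrite exprS -natr1; nra.
have ra0 : 0 < rho * (a - 1) by rewrite mulr_gt0 // subr_gt0.
have := @archi_boundP _ (rho * (a - 1))^-1; rewrite invr_ge0 ltW // => /(_ isT).
set N := Num.bound _ => hN.
exists N.+1; split => //.
have h1 : 1 < rho * (a - 1) * N.+1%:R.
  by rewrite -ltr_pdivrMl // mulr1 (lt_trans hN) // ltr_nat.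
have := bernoulli N.+1.
rewrite -[X in X < _]div1r ltr_pdivrMr ?exprn_gt0 ?(lt_trans ltr01) //; nra.
Qed.

(* One term [c_k (z^k - z'^k)] of the power series, [K = |k|]: [|c_k| r^K <= C], the
   monomial difference is [<= d s^(K-1)], and the radius condition [2 C s <= r^2] turns the
   product into [<= d / 2]. *)
Lemma mixed_coef_term_le (R : realFieldType) (c X d s r C : R) (K : nat) :
  0 <= c -> 0 <= X -> 0 <= d -> 0 < s -> s <= r -> 2 * C * s <= r ^+ 2 ->
  c * r ^+ K <= C -> X * s <= d * s ^+ K -> (2 <= K)%N -> c * X <= d / 2.
Proof.
case: K => [|[|k]] // c0 X0 d0 s0 sr hC hcr hXs _.
have r0 : 0 < r := lt_le_trans s0 sr.
have skrk : s ^+ k <= r ^+ k by rewrite lerXn2r // nnegrE ltW.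
have hX : X <= d * s ^+ k * s.
  by rewrite -(ler_pM2r s0); apply: le_trans hXs _; rewrite !exprSr !mulrA.
have hc2 : c * r ^+ k * (2 * s) <= 1.
  rewrite -(ler_pM2r (exprn_gt0 2 r0)) mul1r; apply: le_trans hC.
  have -> : c * r ^+ k * (2 * s) * r ^+ 2 = c * r ^+ k.+2 * (2 * s).
    by rewrite !exprS; ring.
  nra.
have cdX : c * X <= c * (d * s ^+ k * s) by rewrite ler_wpM2l.
have : c * d * s * (s ^+ k) <= c * d * s * r ^+ k.
  by rewrite ler_wpM2l // !mulr_ge0 // ltW.
nra.
Qed.

Section Monomials.
Variable F0 : fieldType.

Definition vpair n (x y : 'I_n -> F0) : 'I_(n + n) -> F0 :=
  fun j => match split j with inl i => x i | inr i => y i end.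

Lemma vpair_lshift n (x y : 'I_n -> F0) i : vpair x y (lshift n i) = x i.
Proof. by rewrite /vpair (unsplitK (inl _ i)). Qed.

Lemma vpair_rshift n (x y : 'I_n -> F0) i : vpair x y (rshift n i) = y i.
Proof. by rewrite /vpair (unsplitK (inr _ i)). Qed.

Lemma lpart_vpair n (x y : 'I_n -> F0) : lpart (vpair x y) = x.
Proof. by apply: functional_extensionality => i; rewrite /lpart vpair_lshift. Qed.

Lemma rpart_vpair n (x y : 'I_n -> F0) : rpart (vpair x y) = y.
Proof. by apply: functional_extensionality => i; rewrite /rpart vpair_rshift. Qed.

Definition mon m (k : 'I_m -> nat) (z : 'I_m -> F0) : F0 := \prod_(j < m) z j ^+ k j.

Definition mixed_diff n (h : ('I_n -> F0) -> ('I_n -> F0) -> F0) (x y x' y' : 'I_n -> F0) :=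
  h x y - h x (vzero n) - h (vzero n) y - (h x' y' - h x' (vzero n) - h (vzero n) y').

Lemma mon_vpair n (k : 'I_(n + n) -> nat) (x y : 'I_n -> F0) :
  mon k (vpair x y) = mon (fun i => k (lshift n i)) x * mon (fun i => k (rshift n i)) y.
Proof.
rewrite /mon big_split_ord /=.
by congr (_ * _); apply: eq_bigr => i _; rewrite ?vpair_lshift ?vpair_rshift.
Qed.

Lemma mon_const1 m (k : 'I_m -> nat) : (forall i, k i = 0%N) -> forall z, mon k z = 1.
Proof. by move=> k0 z; apply: big1 => i _; rewrite k0. Qed.

Lemma mon_vzero m (k : 'I_m -> nat) i : k i != 0%N -> mon k (vzero m) = 0.
Proof. by move=> ki; rewrite /mon (bigD1 i) //= expr0n (negbTE ki) mul0r. Qed.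

Lemma mixed_diff_mon n (k : 'I_(n + n) -> nat) (x y x' y' : 'I_n -> F0) :
  let h u v := mon k (vpair u v) in
  mixed_diff h x y x' y' = 0 \/
  (2 <= \sum_(j < n + n) k j)%N /\ mixed_diff h x y x' y' = h x y - h x' y'.
Proof.
rewrite /mixed_diff !mon_vpair big_split_ord /=.
have [kl0|/forallPn [i kli]] := boolP [forall i, k (lshift n i) == 0%N].
  have m1 : forall z, mon (fun i => k (lshift n i)) z = 1.
    by apply: mon_const1 => i; apply/eqP; exact: (forallP kl0 i).
  by left; rewrite !m1; ring.
have [kr0|/forallPn [j krj]] := boolP [forall j, k (rshift n j) == 0%N].
  have m1 : forall z, mon (fun j => k (rshift n j)) z = 1.
    by apply: mon_const1 => j; apply/eqP; exact: (forallP kr0 j).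
  by left; rewrite !m1; ring.
right; rewrite (mon_vzero (k := fun i => k (lshift n i)) kli).
rewrite (mon_vzero (k := fun j => k (rshift n j)) krj); split; last by ring.
by rewrite (bigD1 i) // [X in (_ + X)%N](bigD1 j) //=; lia.
Qed.

Lemma mixed_diff_ps_partial n (c : ('I_(n + n) -> nat) -> F0) M (x y x' y' : 'I_n -> F0) :
  mixed_diff (fun u v => ps_partial c (vpair u v) M) x y x' y' =
  \sum_(k : {ffun 'I_(n + n) -> 'I_M.+1} | (\sum_j (k j : nat) <= M)%N)
     c (fun j => k j : nat) *
     mixed_diff (fun u v => mon (fun j => k j : nat) (vpair u v)) x y x' y'.
Proof. by rewrite /mixed_diff /ps_partial -!sumrB; apply: eq_bigr => k _; rewrite !mulrBr. Qed.

End Monomials.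

Section UltrametricEstimates.
Variables (R : realType) (F0 : fieldType) (abs : F0 -> R).
Hypotheses (abs0 : abs 0 = 0) (abs1 : abs 1 = 1) (abs_ge0 : forall x, 0 <= abs x)
  (absM : forall x y, abs (x * y) = abs x * abs y)
  (absD_max : forall x y, abs (x + y) <= Num.max (abs x) (abs y)).

Lemma absN x : abs (- x) = abs x.
Proof.
have absN1 : abs (-1) = 1.
  by apply/eqP; rewrite -sqrp_eq1 // expr2 -absM mulrNN mulr1 abs1.
by rewrite -mulN1r absM absN1 mul1r.
Qed.

Lemma absD_le x y B : abs x <= B -> abs y <= B -> abs (x + y) <= B.
Proof. by move=> xB yB; apply: le_trans (absD_max x y) _; rewrite ge_max xB. Qed.

Lemma absB_lt x y B : abs x < B -> abs y < B -> abs (x - y) < B.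
Proof. by move=> xB yB; apply: le_lt_trans (absD_max x (- y)) _; rewrite gt_max absN xB. Qed.

Lemma abs_sum_le (I : Type) (r : seq I) (P : pred I) (F : I -> F0) B :
  0 <= B -> (forall i, P i -> abs (F i) <= B) -> abs (\sum_(i <- r | P i) F i) <= B.
Proof. by move=> B0 FB; elim/big_ind: _ => // [|x y]; [rewrite abs0 | apply: absD_le]. Qed.

Lemma vnorm_lt m (z : 'I_m -> F0) B : 0 < B -> (forall j, abs (z j) < B) -> vnorm abs z < B.
Proof. by move=> B0 zB; rewrite /vnorm; elim/big_ind: _ => // a b aB bB; rewrite gt_max aB. Qed.

Lemma vnorm_ge m (z : 'I_m -> F0) j : abs (z j) <= vnorm abs z.
Proof. by rewrite /vnorm (bigD1 j) //= le_max lexx. Qed.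

Lemma vsub0 m (z : 'I_m -> F0) : vsub z (vzero m) = z.
Proof. by apply: functional_extensionality => j; rewrite /vsub subr0. Qed.

(* [abs (a - a') <= d * s ^+ e.-1], multiplied by [s] so that [e = 0] needs no special case *)
Definition deg_close (s d : R) (e : nat) (a a' : F0) :=
  [/\ abs a <= s ^+ e, abs a' <= s ^+ e & abs (a - a') * s <= d * s ^+ e].

Definition vclose (s d : R) m (z z' : 'I_m -> F0) :=
  forall j, [/\ abs (z j) <= s, abs (z' j) <= s & abs (z j - z' j) <= d].

Section DegClose.
Variables (s d : R).
Hypotheses (s0 : 0 <= s) (d0 : 0 <= d).

Lemma deg_close1 : deg_close s d 0 1 1.
Proof. by rewrite /deg_close expr0 abs1 subrr abs0 mul0r mulr1. Qed.

Lemma deg_closeM p q a a' b b' : deg_close s d p a a' -> deg_close s d q b b' ->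
  deg_close s d (p + q) (a * b) (a' * b').
Proof.
move=> [a_le a'_le aa'] [b_le b'_le bb'].
split; rewrite ?absM exprD; try exact: ler_pM.
have -> : a * b - a' * b' = a * (b - b') + (a - a') * b' by ring.
apply: le_trans (ler_wpM2r s0 (absD_max _ _)) _.
rewrite maxr_pMl // ge_max !absM; apply/andP; split.
  have -> : d * (s ^+ p * s ^+ q) = s ^+ p * (d * s ^+ q) by ring.
  by rewrite -mulrA ler_pM // mulr_ge0.
have -> : d * (s ^+ p * s ^+ q) = d * s ^+ p * s ^+ q by ring.
by rewrite mulrAC ler_pM // mulr_ge0.
Qed.

Lemma deg_closeX k a a' : abs a <= s -> abs a' <= s -> abs (a - a') <= d ->
  deg_close s d k (a ^+ k) (a' ^+ k).
Proof.
move=> a_le a'_le aa'; elim: k => [|k IH]; first exact: deg_close1.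
rewrite !exprS -add1n; apply: deg_closeM IH.
by split; rewrite ?expr1 // ler_wpM2r.
Qed.

Lemma deg_close_mon m (k : 'I_m -> nat) z z' :
  vclose s d z z' -> deg_close s d (\sum_j k j) (mon k z) (mon k z').
Proof.
move=> zz'; apply: (big_rec3 (fun a a' e => deg_close s d e a a')) => [|j a a' e _].
  exact: deg_close1.
by have [] := zz' j; move=> *; apply: deg_closeM => //; apply: deg_closeX.
Qed.

End DegClose.

Lemma vclose_vpair s d n (x y x' y' : 'I_n -> F0) :
  vclose s d x x' -> vclose s d y y' -> vclose s d (vpair x y) (vpair x' y').
Proof. by move=> xx' yy' j; rewrite /vpair; case: split. Qed.

Lemma vclose_le s s' d m (z z' : 'I_m -> F0) : s <= s' -> vclose s d z z' -> vclose s' d z z'.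
Proof. by move=> ss' zz' j; have [z_le z'_le ?] := zz' j; split; rewrite ?(le_trans _ ss'). Qed.

Lemma mixed_diff_mon_le n (k : 'I_(n + n) -> nat) c (x y x' y' : 'I_n -> F0) (s d r C : R) :
  0 < s -> s <= r -> 2 * C * s <= r ^+ 2 -> 0 <= d -> abs c * r ^+ (\sum_j k j) <= C ->
  vclose s d x x' -> vclose s d y y' ->
  abs (c * mixed_diff (fun u v => mon k (vpair u v)) x y x' y') <= d / 2.
Proof.
move=> s0 sr sC d0 cC xx' yy'.
have [->|[k2 ->]] := mixed_diff_mon k x y x' y'.
  by rewrite mulr0 abs0 divr_ge0.
have [_ _ hk] := deg_close_mon (ltW s0) d0 k (vclose_vpair xx' yy').
by rewrite absM (mixed_coef_term_le _ _ d0 s0 sr sC cC hk).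
Qed.

Definition abs_cvg (u : nat -> F0) (l : F0) :=
  forall eps, 0 < eps -> exists N, forall M, (N <= M)%N -> abs (u M - l) < eps.

Lemma abs_cvgB u v a b : abs_cvg u a -> abs_cvg v b -> abs_cvg (fun M => u M - v M) (a - b).
Proof.
move=> ua vb eps eps0; have [N1 h1] := ua eps eps0; have [N2 h2] := vb eps eps0.
exists (maxn N1 N2) => M; rewrite geq_max => /andP [/h1 uM /h2 vM].
have -> : u M - v M - (a - b) = (u M - a) - (v M - b) by ring.
exact: absB_lt.
Qed.

Lemma abs_cvg_le u a B : (forall M, abs (u M) <= B) -> abs_cvg u a -> abs a <= B.
Proof.
move=> uB ua; rewrite leNgt; apply/negP => Ba.
have [N hN] := ua (abs a) (le_lt_trans (le_trans (abs_ge0 _) (uB 0%N)) Ba).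
have := absB_lt (le_lt_trans (uB N) Ba) (hN N (leqnn N)).
by rewrite opprB addrC subrK ltxx.
Qed.

Lemma coef_bounded m (c : ('I_m -> nat) -> F0) (r : R) :
  (forall eps : R, 0 < eps -> exists N : nat, forall k : 'I_m -> nat,
     (N <= \sum_(i < m) k i)%N -> abs (c k) * r ^+ (\sum_(i < m) k i) < eps) ->
  exists C : R, 0 < C /\ forall k : 'I_m -> nat, abs (c k) * r ^+ (\sum_(i < m) k i) <= C.
Proof.
move=> hc; have [N hN] := hc 1 ltr01.
pose term (k : 'I_m -> nat) := abs (c k) * r ^+ (\sum_(i < m) k i).
exists (Num.max 1 (\big[Num.max/0]_(kk : {ffun 'I_m -> 'I_N}) term (fun i => kk i : nat))).
split=> [|k]; first by rewrite lt_max ltr01.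
rewrite le_max; have [Nk|kN] := leqP N (\sum_i k i); first by rewrite ltW ?hN.
have kiN i : (k i < N)%N by apply: leq_ltn_trans kN; rewrite (bigD1 i) //= leq_addr.
pose kk : {ffun 'I_m -> 'I_N} := [ffun i => Ordinal (kiN i)].
have ek : (fun i => kk i : nat) = k by apply: functional_extensionality => i; rewrite ffunE.
have := @le_bigmax _ _ _ 0 (fun kk : {ffun 'I_m -> 'I_N} => term (fun i => kk i : nat)) kk.
by rewrite /= ek => ->; rewrite orbT.
Qed.

Lemma analytic_mixed_diff_le n D (g : ('I_(n + n) -> F0) -> F0) :
  D (vzero (n + n)) -> analytic_on abs D g ->
  exists rho : R, 0 < rho /\ forall d (x y x' y' : 'I_n -> F0), 0 <= d ->
    vclose rho d x x' -> vclose rho d y y' ->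
    abs (mixed_diff (fun u v => g (vpair u v)) x y x' y') <= d / 2.
Proof.
move=> D0 /(_ _ D0) [r [c [r0 _ hc hconv]]].
have [C [C0 hC]] := coef_bounded hc.
pose rho := Num.min (r / 2) (r ^+ 2 / (2 * C)).
have rho0 : 0 < rho by rewrite lt_min !divr_gt0 ?exprn_gt0 ?mulr_gt0.
have rho_r : rho < r by rewrite gt_min ltr_pdivrMr // ltr_pMr // ltr1n.
have rhoC : 2 * C * rho <= r ^+ 2.
  by rewrite mulrC -ler_pdivlMr ?mulr_gt0 // ge_min lexx orbT.
exists rho; split => // d x y x' y' d0 xx' yy'.
have cvg u v : (forall j, abs (u j) <= rho) -> (forall j, abs (v j) <= rho) ->
    abs_cvg (fun M => ps_partial c (vpair u v) M) (g (vpair u v)).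
  move=> u_le v_le; have := hconv (vpair u v); rewrite vsub0; apply.
  by apply: vnorm_lt => // j; rewrite /vpair; case: split => i; apply: le_lt_trans rho_r.
have z_le j : abs (vzero n j) <= rho by rewrite abs0 ltW.
have x_le j : abs (x j) <= rho by case: (xx' j).
have x'_le j : abs (x' j) <= rho by case: (xx' j).
have y_le j : abs (y j) <= rho by case: (yy' j).
have y'_le j : abs (y' j) <= rho by case: (yy' j).
apply: (@abs_cvg_le (fun M => mixed_diff (fun u v => ps_partial c (vpair u v) M) x y x' y')).
  move=> M; rewrite mixed_diff_ps_partial; apply: abs_sum_le => [|k _].
    by rewrite divr_ge0.
  exact: mixed_diff_mon_le rho0 (ltW rho_r) rhoC d0 (hC _) xx' yy'.
by rewrite /mixed_diff; repeat apply: abs_cvgB; apply: cvg.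
Qed.

Lemma analytic_pairs_mixed_diff_le n Om (f : ('I_n -> F0) -> ('I_n -> F0) -> 'I_n -> F0) :
  Om (vzero n) (vzero n) -> analytic_pairs abs Om f ->
  exists rho : R, 0 < rho /\ forall i d (x y x' y' : 'I_n -> F0), 0 <= d ->
    vclose rho d x x' -> vclose rho d y y' ->
    abs (mixed_diff (fun u v => f u v i) x y x' y') <= d / 2.
Proof.
move=> Om0 hf.
have /functional_choice [rho hrho] : forall i, exists rho : R, 0 < rho /\
    forall d (x y x' y' : 'I_n -> F0), 0 <= d -> vclose rho d x x' -> vclose rho d y y' ->
    abs (mixed_diff (fun u v => f u v i) x y x' y') <= d / 2.
  move=> i; have [rho [rho0 H]] := @analytic_mixed_diff_le n _ _ Om0 (hf i).
  exists rho; split => // d x y x' y' d0 xx' yy'.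
  by have := H d x y x' y' d0 xx' yy'; rewrite /mixed_diff !lpart_vpair !rpart_vpair.
exists (\big[Num.min/1]_i rho i); split; first by apply: lt_bigmin => // i _; case: (hrho i).
move=> i d x y x' y' d0 xx' yy'; have [_ H] := hrho i.
by apply: H => //; [apply: (vclose_le _ xx') | apply: (vclose_le _ yy')]; exact: bigmin_le.
Qed.

End UltrametricEstimates.

Section DiscreteValuation.
Variables (R : realType) (F0 : fieldType) (R0 : F0 -> Prop) (t : F0) (alpha : R)
  (abs : F0 -> R).
Hypotheses (halpha : 1 < alpha) (hR0 : is_DVR_unif R0 t) (hF0 : is_fraction_field_of R0)
  (habs0 : abs 0 = 0)
  (habs : forall (k : int) (u : F0), unit_of R0 u -> abs (t ^ k * u) = alpha ^ (- k)).

Let alpha_gt0 : 0 < alpha. Proof. exact: lt_trans ltr01 halpha. Qed.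
Let R0_subring : is_subring R0. Proof. by case: hR0. Qed.
Let R0t : R0 t. Proof. by case: hR0. Qed.
Let t_neq0 : t != 0. Proof. by case: hR0. Qed.

Lemma R0_tunit_decomp x : R0 x -> x != 0 -> exists (k : nat) u, unit_of R0 u /\ x = t ^+ k * u.
Proof. by case: hR0 => _ _ _ _; apply. Qed.

Lemma tunit_decomp x : x != 0 -> exists (k : int) u, unit_of R0 u /\ x = t ^ k * u.
Proof.
have [a [b [Ra Rb b0 ->]]] := hF0 x => x0.
have a0 : a != 0 by apply: contraNneq x0 => ->; rewrite mul0r.
have [i [u [ua ->]]] := R0_tunit_decomp Ra a0.
have [j [v [[Rv v0 Rv'] ->]]] := R0_tunit_decomp Rb b0.
exists (i%:Z - j%:Z), (u / v); split.
  by apply: unit_ofM => //; split; rewrite ?invr_eq0 ?invrK.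
by rewrite expfzDr // -exprnN -!exprnP invfM; ring.
Qed.

Lemma abs_ge0 x : 0 <= abs x.
Proof.
have [->|/tunit_decomp [k [u [uu ->]]]] := eqVneq x 0; first by rewrite habs0.
by rewrite habs // exprz_ge0 // ltW.
Qed.

Lemma abs_le_exprzP (k : int) x :
  abs x <= alpha ^ (- k) <-> exists y, R0 y /\ x = t ^ k * y.
Proof.
have [R00 _ _ R0M] := R0_subring.
split.
  have [->|/tunit_decomp [l [u [uu ->]]]] := eqVneq x 0.
    by exists 0; rewrite mulr0.
  rewrite habs // ler_eXz2l // lerN2 => kl.
  have [m ->] : exists m : nat, l = k + m%:Z by exists `|l - k|%N; lia.
  exists (t ^+ m * u); split; first by apply: R0M; [exact: subring_exprn | case: uu].
  by rewrite mulrA exprnP -expfzDr.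
move=> [y [Ry ->]].
have [->|/(R0_tunit_decomp Ry) [j [u [uu ->]]]] := eqVneq y 0.
  by rewrite mulr0 habs0 exprz_ge0 // ltW.
rewrite mulrA exprnP -expfzDr // habs // ler_eXz2l //; lia.
Qed.

Lemma abs_discrete_exprz (k : int) x : abs x < alpha ^ (- k) -> abs x <= alpha ^ (- (k + 1)).
Proof.
have [->|/tunit_decomp [l [u [uu ->]]]] := eqVneq x 0.
  by rewrite habs0 exprz_ge0 // ltW.
by rewrite !habs // ltr_eXz2l // ler_eXz2l //; lia.
Qed.

Lemma absM x y : abs (x * y) = abs x * abs y.
Proof.
have [->|/tunit_decomp [k [u [uu ->]]]] := eqVneq x 0; first by rewrite mul0r habs0 mul0r.
have [->|/tunit_decomp [l [v [uv ->]]]] := eqVneq y 0; first by rewrite mulr0 habs0 mulr0.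
have -> : t ^ k * u * (t ^ l * v) = t ^ (k + l) * (u * v) by rewrite expfzDr //; ring.
rewrite !habs //; last exact: unit_ofM.
by rewrite opprD expfzDr // gt_eqF.
Qed.

Lemma abs1 : abs 1 = 1.
Proof.
have [_ R01 _ _] := R0_subring.
have u1 : unit_of R0 1 by split; rewrite ?oner_neq0 ?invr1.
have := habs 0 u1.
by rewrite expr0z mul1r oppr0 expr0z.
Qed.

Lemma absD_max x y : abs (x + y) <= Num.max (abs x) (abs y).
Proof.
wlog xy : x y / abs x <= abs y.
  move=> H; have [/H //|] := boolP (abs x <= abs y).
  by rewrite -ltNge => /ltW /H; rewrite addrC maxC.
have [->|/tunit_decomp [l [u [uu ey]]]] := eqVneq y 0.
  by rewrite addr0 le_max lexx.
have absy : abs y = alpha ^ (- l) by rewrite ey habs.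
have [x' [Rx' ->]] : exists x', R0 x' /\ x = t ^ l * x'.
  by apply/abs_le_exprzP; rewrite -absy.
rewrite ey -mulrDr -ey le_max absy (abs_le_exprzP l _).2 ?orbT //.
exists (x' + u); split => //.
by have [_ RD _] := subring_submodule R0_subring; apply: RD => //; case: uu.
Qed.

Lemma in_tpow_absP (m : nat) x : in_tpow t m R0 x <-> abs x <= alpha ^- m.
Proof. by rewrite exprnN; apply: iff_sym; apply: abs_le_exprzP. Qed.

Lemma abs_discrete (m : nat) x : abs x < alpha ^- m -> abs x <= alpha ^- m.+1.
Proof. by rewrite !exprnN -addn1 PoszD; apply: abs_discrete_exprz. Qed.


Lemma local_contraction n Om (f : ('I_n -> F0) -> ('I_n -> F0) -> 'I_n -> F0) :
  open_pairs abs Om -> Om (vzero n) (vzero n) -> analytic_pairs abs Om f ->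
  (exists U : ('I_n -> F0) -> Prop, [/\ open_set abs U, U (vzero n) &
     forall x, U x -> forall i, f x (vzero n) i = x i /\ f (vzero n) x i = x i]) ->
  exists N : nat, [/\ (0 < N)%N,
    forall x y, vin_tpow t N R0 x -> vin_tpow t N R0 y -> Om x y &
    perturbation_contracts t N R0 f].
Proof.
move=> hOm Om0 hf [U [hU U0 Uf]].
have [rU [rU0 inU]] := hU _ U0.
have [rO [rO0 inOm]] := hOm (vzero (n + n)) Om0.
have [rL [rL0 hL]] := analytic_pairs_mixed_diff_le habs0 abs1 abs_ge0 absM absD_max Om0 hf.
have rho0 : 0 < Num.min rU (Num.min rO rL) by rewrite !lt_min rU0 rO0.
have [N [N0 hN]] := exists_invexpr_lt halpha rho0.
have small x : in_tpow t N R0 x -> [/\ abs x < rU, abs x < rO & abs x < rL].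
  move=> /in_tpow_absP/le_lt_trans/(_ hN).
  by rewrite !lt_min => /and3P [-> -> ->].
have smallU x : vin_tpow t N R0 x -> U x.
  move=> xN; apply: inU; rewrite vsub0; apply: vnorm_lt => // j; by case: (small _ (xN j)).
exists N; split => // [x y xN yN | m x y x' y' xN yN x'N y'N xx' yy' i].
  have := inOm (vpair x y); rewrite vsub0 lpart_vpair rpart_vpair; apply.
  apply: vnorm_lt => // j; rewrite /vpair; case: split => k.
    by case: (small _ (xN k)).
  by case: (small _ (yN k)).
have vclose_of (u u' : 'I_n -> F0) : vin_tpow t N R0 u -> vin_tpow t N R0 u' ->
    vin_tpow t m R0 (vsub u u') -> vclose abs rL (alpha ^- m) u u'.
  move=> uN u'N uu' j; split; [by case: (small _ (uN j)) => _ _ /ltW|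
    by case: (small _ (u'N j)) => _ _ /ltW | exact/in_tpow_absP/uu'].
have am0 : 0 < alpha ^- m by rewrite invr_gt0 exprn_gt0 // (lt_trans ltr01).
have := hL i _ _ _ _ _ (ltW am0) (vclose_of _ _ xN x'N xx') (vclose_of _ _ yN y'N yy').
rewrite /mixed_diff (Uf _ (smallU _ xN) i).1 (Uf _ (smallU _ yN) i).2.
rewrite (Uf _ (smallU _ x'N) i).1 (Uf _ (smallU _ y'N) i).2 => le_half.
apply/in_tpow_absP/abs_discrete/(le_lt_trans le_half).
by rewrite ltr_pdivrMr // ltr_pMr // ltr1n.
Qed.

End DiscreteValuation.

Section NewtonIteration.
Variables (F0 : fieldType) (T R0 V W : F0 -> Prop) (t : F0).
Hypotheses (hT : is_subring T) (Tt : T t) (hR0 : is_subring R0) (R0t : R0 t)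
  (R0_sep : forall x, R0 x -> (forall m, in_tpow t m.+1 R0 x) -> x = 0)
  (hV : is_submodule T V) (hW : is_submodule T W)
  (VR0 : forall x, V x -> R0 x) (WR0 : forall x, W x -> R0 x)
  (hVc : tadic_complete t V) (hWc : tadic_complete t W)
  (hVW : forall x, R0 x -> exists v w, [/\ V v, W w & x = v + w]).
Variables (n N : nat) (f : ('I_n -> F0) -> ('I_n -> F0) -> 'I_n -> F0) (a : 'I_n -> F0).
Hypotheses (N0 : (0 < N)%N) (f0 : forall i, f (vzero n) (vzero n) i = 0)
  (f_contr : perturbation_contracts t N R0 f) (aN : vin_tpow t N R0 a).

Let R0mod : is_submodule R0 R0 := subring_submodule hR0.

Definition newton_inv j (xy : ('I_n -> F0) * ('I_n -> F0)) :=
  [/\ forall i, V (xy.1 i), forall i, W (xy.2 i), vin_tpow t N R0 xy.1, vin_tpow t N R0 xy.2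
    & vin_tpow t (N + j) R0 (vsub a (f xy.1 xy.2))].

Definition newton_rel j (xy xy' : ('I_n -> F0) * ('I_n -> F0)) :=
  vin_tpow t (N + j) V (vsub xy'.1 xy.1) /\ vin_tpow t (N + j) W (vsub xy'.2 xy.2).

Lemma newton_inv0 : newton_inv 0 (vzero n, vzero n).
Proof.
have [R00 _ _ _] := hR0; have [V0 _ _] := hV; have [W0 _ _] := hW.
have zN : vin_tpow t N R0 (vzero n) by exists 0; rewrite mulr0.
by split=> // i; rewrite /vsub f0 subr0 addn0.
Qed.

Lemma newton_step j xy : newton_inv j xy -> exists xy', newton_inv j.+1 xy' /\ newton_rel j xy xy'.
Proof.
case: xy => x y [/= Vx Wy xN yN res].
have [_ VD VZ] := hV; have [_ WD WZ] := hW.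
have /functional_choice [pq hpq] : forall i, exists pq : F0 * F0,
    [/\ V pq.1, W pq.2 & a i - f x y i = t ^+ (N + j) * (pq.1 + pq.2)].
  move=> i; have [b [Rb eb]] := res i; have [p [q [Vp Wq ebpq]]] := hVW Rb.
  by exists (p, q); rewrite /vsub in eb; rewrite eb ebpq.
pose x' i := x i + t ^+ (N + j) * (pq i).1.
pose y' i := y i + t ^+ (N + j) * (pq i).2.
have dx : vin_tpow t (N + j) V (vsub x' x).
  by move=> i; exists (pq i).1; rewrite /vsub /x' /= addrAC subrr add0r; case: (hpq i).
have dy : vin_tpow t (N + j) W (vsub y' y).
  by move=> i; exists (pq i).2; rewrite /vsub /y' /= addrAC subrr add0r; case: (hpq i).
have dxR i : in_tpow t (N + j) R0 (x' i - x i) := in_tpow_sub VR0 (dx i).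
have dyR i : in_tpow t (N + j) R0 (y' i - y i) := in_tpow_sub WR0 (dy i).
have x'N : vin_tpow t N R0 x'.
  move=> i; rewrite -(subrK (x i) (x' i)); apply: (in_tpowD R0mod); last exact: xN.
  exact: (in_tpow_le hR0 R0mod R0t (leq_addr j N) (dxR i)).
have y'N : vin_tpow t N R0 y'.
  move=> i; rewrite -(subrK (y i) (y' i)); apply: (in_tpowD R0mod); last exact: yN.
  exact: (in_tpow_le hR0 R0mod R0t (leq_addr j N) (dyR i)).
have tT : T (t ^+ (N + j)) by apply: subring_exprn.
exists (x', y'); split => //; split => //= i.
- by apply: VD; [apply: Vx | apply: VZ => //; case: (hpq i)].
- by apply: WD; [apply: Wy | apply: WZ => //; case: (hpq i)].
have [_ _ epq] := hpq i.
have -> : vsub a (f x' y') i = - (f x' y' i - x' i - y' i - (f x y i - x i - y i)).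
  have ea : a i = t ^+ (N + j) * ((pq i).1 + (pq i).2) + f x y i by rewrite -epq subrK.
  by rewrite /vsub ea /x' /y'; ring.
by rewrite addnS; apply: (in_tpowN hR0 R0mod); apply: f_contr.
Qed.

Lemma newton_sequence : exists s : nat -> ('I_n -> F0) * ('I_n -> F0),
  forall j, newton_inv j (s j) /\ newton_rel j (s j) (s j.+1).
Proof.
have /functional_choice [next hnext] : forall js : nat * (('I_n -> F0) * ('I_n -> F0)),
    exists xy', newton_inv js.1 js.2 -> newton_inv js.1.+1 xy' /\ newton_rel js.1 js.2 xy'.
  move=> [j xy]; have [/newton_step [xy' ?]|not_inv] := classic (newton_inv j xy).
    by exists xy'.
  by exists xy => /not_inv.
pose s := fix s j := if j is j'.+1 then next (j', s j') else (vzero n, vzero n).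
have inv_s j : newton_inv j (s j).
  by elim: j => [|j IH]; [exact: newton_inv0 | exact: (hnext (j, s j) IH).1].
by exists s => j; split; last exact: (hnext (j, s j) (inv_s j)).2.
Qed.

Lemma newton_solution : exists v w : 'I_n -> F0,
  [/\ forall i, V (v i), forall i, W (w i), vin_tpow t N R0 v, vin_tpow t N R0 w
    & forall i, f v w i = a i].
Proof.
have [s hs] := newton_sequence.
have [v [Vv dv]] := tadic_vlimit hT Tt hV hVc N0 (xs := fun j => (s j).1)
  (fun j => let: conj (And5 Vx _ _ _ _) _ := hs j in Vx) (fun j => (hs j).2.1).
have [w [Ww dw]] := tadic_vlimit hT Tt hW hWc N0 (xs := fun j => (s j).2)
  (fun j => let: conj (And5 _ Wy _ _ _) _ := hs j in Wy) (fun j => (hs j).2.2).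
have dvR m : vin_tpow t m.+1 R0 (vsub v (s m).1) by move=> i; exact: (in_tpow_sub VR0 (dv m i)).
have dwR m : vin_tpow t m.+1 R0 (vsub w (s m).2) by move=> i; exact: (in_tpow_sub WR0 (dw m i)).
have weak k l z : (l <= k)%N -> in_tpow t k R0 z -> in_tpow t l R0 z.
  by move=> lk; apply: (in_tpow_le hR0 R0mod R0t lk).
have [[_ _ xN yN _] _] := hs N.-1.
have vN : vin_tpow t N R0 v.
  move=> i; rewrite -(subrK ((s N.-1).1 i) (v i)); apply: (in_tpowD R0mod) (xN i).
  by have := dvR N.-1 i; rewrite prednK.
have wN : vin_tpow t N R0 w.
  move=> i; rewrite -(subrK ((s N.-1).2 i) (w i)); apply: (in_tpowD R0mod) (yN i).
  by have := dwR N.-1 i; rewrite prednK.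
have res_vw i m : in_tpow t m.+1 R0 (a i - f v w i).
  have [[_ _ xmN ymN res] _] := hs m.
  set x := (s m).1 in xmN res *; set y := (s m).2 in ymN res *.
  have -> : a i - f v w i = (a i - f x y i) - (v i - x i) - (w i - y i)
      - (f v w i - v i - w i - (f x y i - x i - y i)) by ring.
  apply: (in_tpowB hR0 R0mod); first apply: (in_tpowB hR0 R0mod);
    first apply: (in_tpowB hR0 R0mod).
  - by apply: weak (res i); rewrite addnC -addn1 leq_add2l.
  - exact: dvR.
  - exact: dwR.
  apply: f_contr => // j; apply: weak (leqnSn m) _; [exact: dvR | exact: dwR].
exists v, w; split => // i.
apply/eqP; rewrite eq_sym -subr_eq0; apply/eqP/R0_sep; last exact: res_vw.
exact: (in_tpow_mem hR0 R0mod R0t (res_vw i 0%N)).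
Qed.

End NewtonIteration.

Theorem corollary3p3 (R : realType) (F0 : fieldType)
  (T R0 F1 F2 V W : F0 -> Prop) (t : F0) (alpha : R) (abs : F0 -> R)
  (* T: complete DVR with uniformizer t, contained in R0 *)
  (hT : is_DVR_unif T t) (hTc : tadic_complete t T) (hTR0 : forall x, T x -> R0 x)
  (* R0: complete DVR with uniformizer t and fraction field F0 *)
  (hR0 : is_DVR_unif R0 t) (hR0c : tadic_complete t R0)
  (hF0 : is_fraction_field_of R0)
  (* absolute value |t^k u| = alpha^(-k), alpha > 1 *)
  (halpha : 1 < alpha) (habs0 : abs 0 = 0)
  (habs : forall (k : int) (u : F0), unit_of R0 u -> abs (t ^ k * u) = alpha ^ (- k))
  (* F1, F2 subfields of F0 containing T *)
  (hF1 : is_subfield F1) (hF2 : is_subfield F2)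
  (hTF1 : forall x, T x -> F1 x) (hTF2 : forall x, T x -> F2 x)
  (* V, W *)
  (hVsub : forall x, V x -> F1 x /\ R0 x) (hWsub : forall x, W x -> F2 x /\ R0 x)
  (hVmod : is_submodule T V) (hWmod : is_submodule T W)
  (hVc : tadic_complete t V) (hWc : tadic_complete t W)
  (hVW : forall x, R0 x -> exists v w, [/\ V v, W w & x = v + w])
  (hVt : forall x, (V x /\ in_tpow t 1 R0 x) <-> in_tpow t 1 V x)
  (hWt : forall x, (W x /\ in_tpow t 1 R0 x) <-> in_tpow t 1 W x)
  (n : nat) (hn : (0 < n)%N)
  (Om : ('I_n -> F0) -> ('I_n -> F0) -> Prop)
  (f : ('I_n -> F0) -> ('I_n -> F0) -> ('I_n -> F0))
  (hOm : open_pairs abs Om) (hOm0 : Om (vzero n) (vzero n))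
  (hf : analytic_pairs abs Om f)
  (hf0 : forall i, f (vzero n) (vzero n) i = 0)
  (hfid : exists U : ('I_n -> F0) -> Prop,
     [/\ open_set abs U, U (vzero n) &
         forall x, U x -> forall i, f x (vzero n) i = x i /\ f (vzero n) x i = x i]) :
  exists eps : R, 0 < eps /\
    forall a : 'I_n -> F0, vnorm abs a <= eps ->
      exists v w : 'I_n -> F0,
        [/\ forall i, V (v i), forall i, W (w i), Om v w & forall i, f v w i = a i].
Proof.
have [T_subring Tt _ _ _] := hT; have [R0_subring R0t _ _ _] := hR0.
have [N [N0 OmN contraction]] := local_contraction halpha hR0 hF0 habs0 habs hOm hOm0 hf hfid.
exists (alpha ^- N); split=> [|a aN]; first by rewrite invr_gt0 exprn_gt0 // (lt_trans ltr01).
have aN' : vin_tpow t N R0 a.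
  by move=> i; apply/(in_tpow_absP halpha hR0 hF0 habs0 habs); apply: le_trans aN; apply: vnorm_ge.
have VR0 x : V x -> R0 x by case/hVsub.
have WR0 x : W x -> R0 x by case/hWsub.
have [v [w [Vv Ww vN wN fvw]]] := newton_solution T_subring Tt R0_subring R0t hR0c.1 hVmod hWmod
  VR0 WR0 hVc hWc hVW N0 hf0 contraction aN'.
by exists v, w; split => //; apply: OmN.
Qed.
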